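(* Let $m\ge2$ be an integer and $j\in\{1,\dots,m-1\}$. The ideal $\langle X^m,X^{m-j}Y^j,Y^m\rangle$ of $R$ is an atom of $\mathcal I(R)$ if and only if $m\neq 2j$.
   Context: Let $D$ be an integral domain, $N\ge2$, $R=D[X_1,\dots,X_N]$, $X=X_1$, $Y=X_2$. $\mathcal I(R)$ denotes the monoid of nonzero ideals of $R$ under ideal multiplication (identity $R$, whose only unit is $R$). Standing assumption: $\mathcal I(R)$ is a BF-monoid. An atom of $\mathcal I(R)$ is an ideal $I\in\mathcal I(R)$, $I\ne R$, such that $I=\mathfrak a\mathfrak b$ with $\mathfrak a,\mathfrak b\in\mathcal I(R)$ forces $\mathfrak a=R$ or $\mathfrak b=R$. *)

From HB Require Import structures.
From mathcomp Require Import all_boot all_algebra.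
From mathcomp Require Import mpoly.
Set Implicit Arguments. Unset Strict Implicit. Unset Printing Implicit Defensive.
Import GRing.Theory.
Local Open Scope ring_scope.

Section Ideals.
Variable R : comNzRingType.

Definition subsetR := R -> Prop.

Definition is_ideal (I : subsetR) : Prop :=
  [/\ I 0, (forall x y, I x -> I y -> I (x + y)) & (forall r x, I x -> I (r * x))].

(* elements of the monoid I(R): nonzero ideals *)
Definition nonzero_ideal (I : subsetR) : Prop :=
  is_ideal I /\ exists x, I x /\ x != 0.

Definition unit_ideal : subsetR := fun _ => True.

Definition ideal_eq (I J : subsetR) : Prop := forall x, I x <-> J x.

Definition ideal_mul (I J : subsetR) : subsetR := fun x =>
  exists n (a b : 'I_n -> R),
    [/\ forall i, I (a i), forall i, J (b i) & x = \sum_(i < n) a i * b i].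

Definition ideal_prod (s : seq subsetR) : subsetR := foldr ideal_mul unit_ideal s.

Definition gen_ideal (g : seq R) : subsetR := fun x =>
  exists c : 'I_(size g) -> R, x = \sum_(i < size g) c i * g`_i.

Definition ideal_atom (I : subsetR) : Prop :=
  [/\ nonzero_ideal I, ~ ideal_eq I unit_ideal &
      forall A B, nonzero_ideal A -> nonzero_ideal B ->
        ideal_eq I (ideal_mul A B) -> ideal_eq A unit_ideal \/ ideal_eq B unit_ideal].

Definition all_atoms (s : seq subsetR) : Prop := forall i, (i < size s)%N -> ideal_atom (nth unit_ideal s i).

Definition ideal_monoid_BF : Prop :=
  forall I, nonzero_ideal I -> ~ ideal_eq I unit_ideal ->
    (exists s, all_atoms s /\ ideal_eq I (ideal_prod s)) /\
    (exists n, forall s, all_atoms s -> ideal_eq I (ideal_prod s) -> (size s <= n)%N).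

End Ideals.

(* the variables X = X_1 and Y = X_2 of D[X_1,...,X_N], N >= 2 (0-indexed) *)
Definition var1 (N : nat) (hN : (1 < N)%N) : 'I_N := Ordinal (ltnW hN).
Definition var2 (N : nat) (hN : (1 < N)%N) : 'I_N := Ordinal hN.

From HB Require Import structures.
From mathcomp Require Import all_boot all_algebra.
From mathcomp Require Import mpoly.
From mathcomp Require Import zify ring.
From Stdlib Require Import Classical.
Set Implicit Arguments. Unset Strict Implicit. Unset Printing Implicit Defensive.
Import GRing.Theory.
Local Open Scope ring_scope.

(* If m = 2j the ideal is the square of the proper ideal (X^j, Y^j).  Conversely, let
   I = AB and let a, b be the least degrees of monomials occurring in A and B; comparing
   lowest-degree parts gives a + b = m.  If a = 0, then A contains an element with nonzero
   constant term; monomial ideals are saturated with respect to such elements, so B is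
   contained in I, hence I = AI, and the determinant trick gives A = R.  If a, b > 0, the
   degree-a initial forms of A and the degree-b initial forms of B multiply into the span
   of X^m, X^(m-j) Y^j, Y^m, and both X^m and Y^m are sums of such products.  Comparing
   the highest powers of X (resp. Y) in these products shows b <= m - j and b <= j, and
   symmetrically for a, so m = a + b forces m = 2j. *)

Section Ideals.
Variable R : comNzRingType.
Implicit Types (A B C : subsetR R) (g : seq R).

Lemma ideal_sub A x y : is_ideal A -> A x -> A y -> A (x - y).
Proof. by move=> [_ AD AM] Ax Ay; rewrite -mulN1r; apply/AD/AM. Qed.

Lemma ideal_mulr A r x : is_ideal A -> A x -> A (x * r).
Proof. by move=> [_ _ AM] Ax; rewrite mulrC; apply: AM. Qed.

Lemma ideal_sum A (I : Type) (s : seq I) (P : pred I) (F : I -> R) :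
  is_ideal A -> (forall i, P i -> A (F i)) -> A (\sum_(i <- s | P i) F i).
Proof. by move=> [A0 AD _] AF; elim/big_ind: _. Qed.

Lemma ideal_unit A : is_ideal A -> A 1 -> ideal_eq A (@unit_ideal R).
Proof. by move=> [_ _ AM] A1 x; split=> // _; rewrite -[x]mulr1; apply: AM. Qed.

Lemma gen_ideal_is_ideal g : is_ideal (gen_ideal g).
Proof.
split.
- by exists (fun=> 0); rewrite big1 // => i _; rewrite mul0r.
- move=> _ _ [c ->] [d ->]; exists (fun i => c i + d i).
  by rewrite -big_split; apply: eq_bigr => i _; rewrite mulrDl.
- move=> r _ [c ->]; exists (fun i => r * c i).
  by rewrite mulr_sumr; apply: eq_bigr => i _; rewrite mulrA.
Qed.

Lemma gen_ideal_nth g i : (i < size g)%N -> gen_ideal g g`_i.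
Proof.
move=> ig; exists (fun k => (val k == i)%:R).
rewrite (bigD1 (Ordinal ig)) //= eqxx mul1r big1 ?addr0 // => k.
by rewrite -val_eqE => /negbTE /= ->; rewrite mul0r.
Qed.

Lemma gen_ideal_mem g x : x \in g -> gen_ideal g x.
Proof. by move=> gx; rewrite -(nth_index 0 gx); apply: gen_ideal_nth; rewrite index_mem. Qed.

Lemma gen_ideal_min g C : is_ideal C -> (forall i, (i < size g)%N -> C g`_i) ->
  forall x, gen_ideal g x -> C x.
Proof.
by move=> hC Cg _ [c ->]; apply: ideal_sum => // i _; case: hC => _ _; apply; apply: Cg.
Qed.

Lemma ideal_mul_prod A B a b : A a -> B b -> ideal_mul A B (a * b).
Proof. by move=> Aa Bb; exists 1%N, (fun=> a), (fun=> b); rewrite big_ord1. Qed.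

Lemma ideal_mulSr A B B' x :
  (forall b, B b -> B' b) -> ideal_mul A B x -> ideal_mul A B' x.
Proof. by move=> BB' [k [a [b [Aa Bb ->]]]]; exists k, a, b; split=> // i; apply: BB'. Qed.

Lemma ideal_mul_min A B C : is_ideal C -> (forall a b, A a -> B b -> C (a * b)) ->
  forall x, ideal_mul A B x -> C x.
Proof. by move=> hC CAB _ [k [a [b [Aa Bb ->]]]]; apply: ideal_sum => // i _; apply: CAB. Qed.

Lemma ideal_mul_is_ideal A B : is_ideal A -> is_ideal (ideal_mul A B).
Proof.
move=> hA; have [A0 _ AM] := hA; split.
- by exists 0%N, (fun=> 0), (fun=> 0); split=> [[]|[]|]; rewrite ?big_ord0.
- move=> _ _ [k [a [b [Aa Bb ->]]]] [l [a' [b' [Aa' Bb' ->]]]].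
  exists (k + l)%N, (fun i => match split i with inl i => a i | inr i => a' i end).
  exists (fun i => match split i with inl i => b i | inr i => b' i end).
  split=> [i|i|]; [by case: (split i) | by case: (split i) |].
  by rewrite big_split_ord; congr (_ + _); apply: eq_bigr => i _;
    [rewrite (unsplitK (inl _ i)) | rewrite (unsplitK (inr _ i))].
- move=> r _ [k [a [b [Aa Bb ->]]]]; exists k, (fun i => r * a i), b.
  by split=> // [i|]; [apply: AM | rewrite mulr_sumr; apply: eq_bigr => i _; rewrite mulrA].
Qed.

Lemma ideal_mulC A B : ideal_eq (ideal_mul A B) (ideal_mul B A).
Proof.
by move=> x; split=> -[k [a [b [Aa Bb ->]]]]; exists k, b, a; split=> //;
  apply: eq_bigr => i _; rewrite mulrC.
Qed.

End Ideals.

Lemma ideal_mul_gen3P (R : comNzRingType) (A : subsetR R) g0 g1 g2 z :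
  is_ideal A -> ideal_mul A (gen_ideal [:: g0; g1; g2]) z ->
  exists M0 M1 M2, [/\ A M0, A M1, A M2 & z = M0 * g0 + M1 * g1 + M2 * g2].
Proof.
move=> hA Az; have [A0 AD _] := hA.
pose C z := exists M0 M1 M2, [/\ A M0, A M1, A M2 & z = M0 * g0 + M1 * g1 + M2 * g2].
have hC : is_ideal C.
  split.
  - by exists 0, 0, 0; split=> //; rewrite !mul0r !addr0.
  - move=> _ _ [M0 [M1 [M2 [AM0 AM1 AM2 ->]]]] [N0 [N1 [N2 [AN0 AN1 AN2 ->]]]].
    by exists (M0 + N0), (M1 + N1), (M2 + N2); split; [exact: AD.. | ring].
  - move=> r _ [M0 [M1 [M2 [AM0 AM1 AM2 ->]]]].
    by exists (r * M0), (r * M1), (r * M2); split; [case: hA => _ _; apply..| ring].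
apply: (ideal_mul_min hC _ Az) => a _ Aa [c ->]; rewrite !big_ord_recl big_ord0 addr0 /=.
by exists (a * c ord0), (a * c (lift ord0 ord0)), (a * c (lift ord0 (lift ord0 ord0)));
  split; try exact: ideal_mulr; ring.
Qed.

Lemma determinant_trick3 (R : idomainType) (A : subsetR R) g0 g1 g2 :
  is_ideal A -> g0 != 0 ->
  (forall g, g \in [:: g0; g1; g2] -> ideal_mul A (gen_ideal [:: g0; g1; g2]) g) ->
  ideal_eq A (@unit_ideal R).
Proof.
move=> hA g0n gAg; apply: ideal_unit => //.
have [M00 [M01 [M02 [A00 A01 A02 e0]]]] := ideal_mul_gen3P hA (gAg g0 (mem_head _ _)).
have [M10 [M11 [M12 [A10 A11 A12 e1]]]] :=
  ideal_mul_gen3P hA (gAg g1 ltac:(by rewrite !inE eqxx orbT)).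
have [M20 [M21 [M22 [A20 A21 A22 e2]]]] :=
  ideal_mul_gen3P hA (gAg g2 ltac:(by rewrite !inE eqxx !orbT)).
(* [d] is [det (1 - M)]: multiplying [(1 - M) g = 0] by the adjugate gives [d * g0 = 0],
   while [1 - d] is an [A]-combination of the entries of [M]. *)
pose d := (1 - M00) * ((1 - M11) * (1 - M22) - M12 * M21)
  - M01 * (M10 * (1 - M22) + M12 * M20) - M02 * (M10 * M21 + (1 - M11) * M20).
have : d * g0 = 0.
  have -> : d * g0 = ((1 - M11) * (1 - M22) - M12 * M21) * (g0 - (M00 * g0 + M01 * g1 + M02 * g2))
      + (M01 * (1 - M22) + M02 * M21) * (g1 - (M10 * g0 + M11 * g1 + M12 * g2))
      + (M01 * M12 + M02 * (1 - M11)) * (g2 - (M20 * g0 + M21 * g1 + M22 * g2)) by rewrite /d; ring.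
  by rewrite -e0 -e1 -e2 !subrr !mulr0 !addr0.
move/eqP; rewrite mulf_eq0 (negbTE g0n) orbF => /eqP d0.
have -> : 1 = M00 * ((1 - M11) * (1 - M22) - M12 * M21) + M01 * (M10 * (1 - M22) + M12 * M20)
    + M02 * (M10 * M21 + (1 - M11) * M20) + M11 * (1 - M22) + M12 * M21 + M22.
  by rewrite -[LHS]subr0 -d0 /d; ring.
by have [_ AD _] := hA; repeat apply: (AD); try apply: ideal_mulr.
Qed.

Section Monomials.
Variable n : nat.
Implicit Types (mu : 'X_{1..n}) (i k : 'I_n).

Definition vdeg i mu : nat := mu i.

Lemma vdeg0 i : vdeg i 0%MM = 0%N. Proof. exact: mnm0E. Qed.
Lemma vdegD i : {morph vdeg i : mu nu / (mu + nu)%MM >-> (mu + nu)%N}.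
Proof. by move=> mu nu; apply: mnmDE. Qed.
HB.instance Definition _ i := isMeasure.Build n (vdeg i) (vdeg0 i) (vdegD i).

Lemma mulmn1E i k e : ((U_(i) *+ e)%MM k = if i == k then e else 0)%N.
Proof. by rewrite mulmnE mnm1E; case: eqP; rewrite ?mul1n ?mul0n. Qed.

Lemma mdegUn i e : mdeg (U_(i) *+ e)%MM = e.
Proof. by rewrite mdegMn mdeg1 mul1n. Qed.

Lemma mnm_le_mdeg mu i : (mu i <= mdeg mu)%N.
Proof. by rewrite mdegE (bigD1 i) //= leq_addr. Qed.

Lemma mnm2_le_mdeg mu i k : i != k -> (mu i + mu k <= mdeg mu)%N.
Proof. by move=> ik; rewrite mdegE (bigD1 i) //= (bigD1 k) 1?eq_sym //= addnA leq_addr. Qed.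

Lemma mnm_mdeg_eqUn mu i : mu i = mdeg mu -> mu = (U_(i) *+ mdeg mu)%MM.
Proof.
move=> e; apply/mnmP => k; rewrite mulmn1E; case: eqP => [<-|/eqP ik] //.
by have := mnm2_le_mdeg mu ik; lia.
Qed.

End Monomials.

Section Weights.
Variables (n : nat) (R : comNzRingType) (w : measure n).
Implicit Types (p q : {mpoly R[n]}) (mu : 'X_{1..n}).

Lemma mcoeff_pihomog d p mu : (pihomog w d p)@_mu = if w mu == d then p@_mu else 0.
Proof.
pose k := maxn (msize p) (mdeg mu).+1.
rewrite (@pihomogwE n R w d k p) ?leq_maxl // big_mkcond /=.
rewrite (eq_bigr (fun m : 'X_{1..n < k} => (if w m == d then p@_m else 0) *: 'X_[m])).
  by rewrite (@mcoeff_mpoly n R (fun m => if w m == d then p@_m else 0)) // leq_maxr.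
by move=> m _; case: ifP; rewrite ?scale0r.
Qed.

Lemma msupp_pihomog d p mu : mu \in msupp (pihomog w d p) -> w mu = d /\ mu \in msupp p.
Proof. by rewrite !mcoeff_msupp mcoeff_pihomog; case: (w mu =P d); rewrite ?eqxx. Qed.

Lemma pihomog_neq0P d p :
  reflect (exists2 mu, mu \in msupp p & w mu = d) (pihomog w d p != 0).
Proof.
apply: (iffP idP) => [|[mu pmu wmu]].
  rewrite -msupp_eq0; case E: msupp => [|mu s] // _.
  have /msupp_pihomog[wmu pmu] : mu \in msupp (pihomog w d p) by rewrite E mem_head.
  by exists mu.
apply/eqP => /mpolyP /(_ mu); rewrite mcoeff_pihomog wmu eqxx mcoeff0.
by move/eqP; rewrite mcoeff_eq0 pmu.
Qed.

Lemma pihomogM dp dq p q :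
  (forall m1 m2, m1 \in msupp p -> m2 \in msupp q ->
     (w m1 + w m2 = dp + dq)%N -> w m1 = dp /\ w m2 = dq) ->
  pihomog w (dp + dq) (p * q) = pihomog w dp p * pihomog w dq q.
Proof.
move=> wpq.
have piE d (r : {mpoly R[n]}) : pihomog w d r = \sum_(m <- msupp r) pihomog w d (r@_m *: 'X_[m]).
  by rewrite {1}[r]mpolyE linear_sum.
have -> : p * q = \sum_(m1 <- msupp p) \sum_(m2 <- msupp q) (p@_m1 *: 'X_[m1]) * (q@_m2 *: 'X_[m2]).
  by rewrite {1}[p]mpolyE {1}[q]mpolyE mulr_suml; apply: eq_bigr => m1 _; rewrite mulr_sumr.
rewrite (piE dp p) (piE dq q) mulr_suml linear_sum !big_seq; apply: eq_bigr => m1 pm1.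
rewrite linear_sum mulr_sumr !big_seq; apply: eq_bigr => m2 qm2 /=.
rewrite -scalerAl -scalerAr scalerA -mpolyXD !linearZ /= !pihomogX mfD.
have [/(wpq _ _ pm1 qm2)[-> ->]|ne] := eqVneq (w m1 + w m2)%N (dp + dq)%N.
  by rewrite !eqxx -scalerAl -scalerAr scalerA mpolyXD.
rewrite scaler0; case: (w m1 =P dp) => [e1|]; last by rewrite scaler0 mul0r.
case: (w m2 =P dq) => [e2|]; last by rewrite scaler0 mulr0.
by rewrite e1 e2 eqxx in ne.
Qed.

Lemma msupp_max_weight p : p != 0 ->
  exists d, {in msupp p, forall mu, w mu <= d}%N /\ exists2 mu, mu \in msupp p & w mu = d.
Proof.
rewrite -msupp_eq0; case E: msupp => [|mu0 s] // _; rewrite -E.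
pose P d := has (fun mu => w mu == d) (msupp p).
have exP : exists d, P d by exists (w mu0); apply/hasP; exists mu0; rewrite ?E ?mem_head.
have ubP d : P d -> (d <= \sum_(mu <- msupp p) w mu)%N.
  by move=> /hasP[mu pmu /eqP <-]; rewrite (big_rem mu) //= leq_addr.
case: (ex_maxnP exP ubP) => d /hasP[mu pmu /eqP wmu] dmax.
exists d; split; last by exists mu.
by move=> nu pnu; apply: dmax; apply/hasP; exists nu.
Qed.

End Weights.

Lemma msuppM_max_weight n (D : idomainType) (w : measure n) (p q : {mpoly D[n]}) dp dq :
  {in msupp p, forall mu, w mu <= dp}%N -> {in msupp q, forall mu, w mu <= dq}%N ->
  (exists2 mu, mu \in msupp p & w mu = dp) -> (exists2 mu, mu \in msupp q & w mu = dq) ->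
  exists2 mu, mu \in msupp (p * q) & w mu = (dp + dq)%N.
Proof.
move=> wp wq /pihomog_neq0P np /pihomog_neq0P nq; apply/pihomog_neq0P.
rewrite pihomogM ?mulf_neq0 // => m1 m2 /wp le1 /wq le2; lia.
Qed.

Section VarPowers.
Variables (n : nat) (R : nzRingType) (i : 'I_n) (k : nat).

Lemma msuppXn : msupp ('X_i ^+ k : {mpoly R[n]}) = [:: U_(i) *+ k]%MM.
Proof. by rewrite mpolyXn msuppX. Qed.

Lemma mpolyXn_neq0 : 'X_i ^+ k != 0 :> {mpoly R[n]}.
Proof. by rewrite -msupp_eq0 msuppXn. Qed.

Lemma pihomog_Xn : pihomog mdeg k ('X_i ^+ k : {mpoly R[n]}) = 'X_i ^+ k.
Proof. by rewrite mpolyXn pihomogX (_ : _ == k) //; apply/eqP/mdegUn. Qed.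

End VarPowers.

Section MonomialIdeals.
Variables (n : nat) (R : comNzRingType).
Implicit Types (gs : seq 'X_{1..n}) (mu nu : 'X_{1..n}) (f : {mpoly R[n]}).

Definition mdvd_some gs mu : bool := has (fun g => (g <= mu)%MM) gs.

Definition mono_ideal gs : subsetR {mpoly R[n]} := gen_ideal [seq 'X_[g] | g <- gs].

Lemma mdvd_some_le gs mu nu : (mu <= nu)%MM -> mdvd_some gs mu -> mdvd_some gs nu.
Proof. by move=> le /hasP[g gs_g gmu]; apply/hasP; exists g => //; apply: lepm_trans le. Qed.

Lemma msuppMX_le f nu mu : mu \in msupp (f * 'X_[nu]) -> (nu <= mu)%MM.
Proof. by rewrite (perm_mem (msuppMX f nu)) => /mapP[mu' _ ->]; apply: lem_addr. Qed.

Lemma mcoeffXM f nu mu : ('X_[nu] * f)@_mu = if (nu <= mu)%MM then f@_(mu - nu) else 0.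
Proof.
case: ifP => [le|/negbT nle]; first by rewrite -{1}(submK le) addmC mulrC mcoeffMX.
by apply: memN_msupp_eq0; apply: contra nle; rewrite mulrC; apply: msuppMX_le.
Qed.

Lemma mono_idealP gs f : mono_ideal gs f <-> {in msupp f, forall mu, mdvd_some gs mu}.
Proof.
split=> [[c ->] mu|gs_f].
  move=> /msupp_sum_le /flattenP[_ /mapP[i _ ->]].
  have ilt : (i < size gs)%N by rewrite -(size_map (fun g => 'X_[g] : {mpoly R[n]})).
  rewrite (nth_map 0%MM) // => /msuppMX_le gi_mu.
  by apply/hasP; exists (nth 0%MM gs i); rewrite ?mem_nth.
rewrite [f]mpolyE big_seq; apply: ideal_sum => [|mu /gs_f /hasP[g gs_g gmu]].
  exact: gen_ideal_is_ideal.
have [_ _ IM] := gen_ideal_is_ideal [seq 'X_[g] : {mpoly R[n]} | g <- gs].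
rewrite -mul_mpolyC -(submK gmu) mpolyXD mulrA; apply/IM/gen_ideal_mem.
exact: map_f.
Qed.

End MonomialIdeals.

(* A monomial ideal is saturated with respect to elements with a nonzero constant term:
   compare coefficients of [u * f] at a monomial of minimal degree outside the ideal. *)
Lemma mono_ideal_cancel n (D : idomainType) (gs : seq 'X_{1..n}) (u f : {mpoly D[n]}) :
  u@_0%MM != 0 -> mono_ideal gs (u * f) -> mono_ideal gs f.
Proof.
move=> u0 /mono_idealP uf_gs; apply/mono_idealP => mu; apply: contraTT => ndiv.
rewrite mcoeff_msupp negbK; have [k] : exists k, (mdeg mu < k)%N by exists (mdeg mu).+1.
elim: k mu ndiv => [//|k IH] mu ndiv mu_k.
have : (u * f)@_mu = 0 by apply: memN_msupp_eq0; apply: contra ndiv; apply: uf_gs.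
have -> : (u * f)@_mu = \sum_(nu <- msupp u) u@_nu * ('X_[nu] * f)@_mu.
  rewrite {1}[u]mpolyE mulr_suml raddf_sum; apply: eq_bigr => nu _.
  by rewrite -scalerAl; apply: mcoeffZ.
rewrite (bigD1_seq 0%MM) ?msupp_uniq ?mcoeff_msupp //= big_seq_cond big1 ?addr0.
  by rewrite mpolyX0 mul1r => /eqP; rewrite mulf_eq0 (negbTE u0).
move=> nu /andP[u_nu nu0]; rewrite mcoeffXM; case: ifP => [le|_]; last by rewrite mulr0.
rewrite (eqP (IH _ _ _)) ?mulr0 //.
  by apply: contra ndiv; apply: mdvd_some_le; apply: lem_subr.
have := mdegD (mu - nu) nu; rewrite submK // => mu_deg.
have : (0 < mdeg nu)%N by rewrite lt0n mdeg_eq0.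
lia.
Qed.

Section InitialForms.
Variables (n : nat) (R : comNzRingType).
Implicit Types (A : subsetR {mpoly R[n]}) (f : {mpoly R[n]}).

Lemma ideal_mdeg_min A : (exists f, A f /\ f != 0) ->
  exists a, (forall f, A f -> {in msupp f, forall mu, a <= mdeg mu}%N) /\
            exists2 f, A f & exists2 mu, mu \in msupp f & mdeg mu = a.
Proof.
move=> [f0 [Af0 f0n]].
pose P a := exists2 f, A f & exists2 mu, mu \in msupp f & mdeg mu = a.
have P_f0 : exists a, P a.
  have [mu f0mu] : exists mu, mu \in msupp f0.
    by move: f0n; rewrite -msupp_eq0; case: msupp => // mu s _; exists mu; rewrite mem_head.
  by exists (mdeg mu), f0 => //; exists mu.
have [a [[Pa amin] _]] :=
  Wf_nat.dec_inh_nat_subset_has_unique_least_element P (fun a => classic (P a)) P_f0.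
exists a; split=> // f Af mu fmu; apply/leP/amin.
by exists f => //; exists mu.
Qed.

(* Degree-[a] parts of elements of [A]: when [a] is the least degree of a monomial occurring
   in [A], these are the initial forms of [A] together with [0]. *)
Definition initial_forms A (a : nat) : subsetR {mpoly R[n]} :=
  fun F => exists2 f, A f & F = pihomog mdeg a f.

Lemma initial_forms_mdeg A a F : initial_forms A a F -> {in msupp F, forall mu, mdeg mu = a}.
Proof. by move=> [f _ ->] mu /msupp_pihomog[]. Qed.

Lemma initial_forms_comb A a F F' (c c' : R) : is_ideal A ->
  initial_forms A a F -> initial_forms A a F' -> initial_forms A a (c *: F - c' *: F').
Proof.
move=> hA [f Af ->] [f' Af' ->]; exists (c%:MP * f - c'%:MP * f').
  by apply: ideal_sub => //; case: hA => _ _; apply.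
by rewrite linearB !mul_mpolyC !linearZ.
Qed.

Lemma initial_forms_vdeg_le A a F (i : 'I_n) :
  initial_forms A a F -> {in msupp F, forall mu, vdeg i mu <= a}%N.
Proof. by move=> /initial_forms_mdeg Fa mu /Fa <-; apply: mnm_le_mdeg. Qed.

End InitialForms.

Section InitialFormsProduct.
Variables (n : nat) (D : idomainType) (x : 'I_n) (a b k : nat).
Variables (A B : subsetR {mpoly D[n]}) (Z : {mpoly D[n]}).
Hypotheses (hA : is_ideal A) (a_gt0 : (0 < a)%N) (b_gt0 : (0 < b)%N).

Local Notation PA := (initial_forms A a).
Local Notation PB := (initial_forms B b).
Local Notation ux := (U_(x) *+ a)%MM.

Hypothesis initial_formsM_vdeg : forall F G, PA F -> PB G ->
  {in msupp (F * G), forall mu, vdeg x mu \in [:: a + b; k; 0]}%N.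
Hypothesis X_initial : ideal_mul PA PB ('X_x ^+ (a + b)).
Hypotheses (Z_neq0 : Z != 0) (Z_vdeg0 : {in msupp Z, forall mu, vdeg x mu = 0%N}).
Hypothesis Z_initial : ideal_mul PA PB Z.

Lemma initial_forms_vdeg_top F : PA F -> F@_ux = 0 -> {in msupp F, forall mu, vdeg x mu < a}%N.
Proof.
move=> PF Fux0 mu Fmu; rewrite ltn_neqAle (initial_forms_vdeg_le x PF Fmu) andbT.
have mu_a := initial_forms_mdeg PF Fmu; apply: contraTneq Fmu => wmu.
by rewrite (mnm_mdeg_eqUn (etrans wmu (esym mu_a))) mu_a mcoeff_msupp Fux0 eqxx.
Qed.

Lemma initial_forms_Xtop :
  exists F0 G0, [/\ PA F0, PB G0, F0@_ux != 0 & exists2 mu, mu \in msupp G0 & vdeg x mu = b].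
Proof.
have [l [Fs [Gs [PFs PGs XE]]]] := X_initial.
have [i Xi] : exists i, (U_(x) *+ (a + b))%MM \in msupp (Fs i * Gs i).
  apply: NNPP => none; have := congr1 (mcoeff (U_(x) *+ (a + b))) XE.
  rewrite raddf_sum big1 => [|i _]; last by apply/memN_msupp_eq0/negP => Xi; apply: none; exists i.
  by rewrite mpolyXn mcoeffX eqxx => /eqP; rewrite oner_eq0.
have : pihomog (vdeg x) (a + b) (Fs i * Gs i) != 0.
  by apply/pihomog_neq0P; exists (U_(x) *+ (a + b))%MM => //=; rewrite /vdeg mulmn1E eqxx.
rewrite pihomogM => [|m1 m2 /(initial_forms_vdeg_le x (PFs i)) le1];
  last by move=> /(initial_forms_vdeg_le x (PGs i)) le2 /=; lia.
rewrite mulf_eq0 negb_or => /andP[/pihomog_neq0P[mu Fmu wmu] /pihomog_neq0P G_b].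
exists (Fs i), (Gs i); split=> //; rewrite -mcoeff_msupp.
have mu_a := initial_forms_mdeg (PFs i) Fmu.
by rewrite -mu_a -(mnm_mdeg_eqUn (etrans wmu (esym mu_a))).
Qed.

Lemma initial_forms_below_top F G : PA F -> PB G -> F != 0 -> F@_ux = 0 ->
  (exists2 mu, mu \in msupp G & vdeg x mu = b) -> (b <= k)%N.
Proof.
move=> PF PG Fn0 Fux0 G_b; have [e [Fe F_e]] := msupp_max_weight (vdeg x) Fn0.
have [mu FGmu wmu] := msuppM_max_weight Fe (initial_forms_vdeg_le x PG) F_e G_b.
have [nu Fnu wnu] := F_e; have := initial_forms_vdeg_top PF Fux0 Fnu.
have := initial_formsM_vdeg PF PG FGmu; rewrite !inE wmu -wnu /=.
by lia.
Qed.

(* If all initial forms of [A] were proportional to [F0], then [Z] would be a multiple of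
   [F0], whose [x]-degree is positive. *)
Lemma initial_forms_not_rank1 F0 : PA F0 -> F0@_ux != 0 ->
  ~ (forall F, PA F -> F0@_ux *: F = F@_ux *: F0).
Proof.
move=> PF0 c0 prop; have [l [Fs [Gs [PFs PGs ZE]]]] := Z_initial.
pose H := \sum_(i < l) (Fs i)@_ux *: Gs i.
have cZE : F0@_ux *: Z = F0 * H.
  rewrite ZE scaler_sumr mulr_sumr; apply: eq_bigr => i _.
  by rewrite scalerAl prop // -scalerAl -scalerAr.
have Hn0 : H != 0.
  have : F0@_ux *: Z != 0 by rewrite mscalerI negb_or c0.
  by rewrite cZE; apply: contraNneq => ->; rewrite mulr0.
have [e [He H_e]] := msupp_max_weight (vdeg x) Hn0.
have F0_a : exists2 mu, mu \in msupp F0 & vdeg x mu = a.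
  by exists ux; rewrite ?mcoeff_msupp //= /vdeg mulmn1E eqxx.
have [mu FHmu wmu] := msuppM_max_weight (initial_forms_vdeg_le x PF0) He F0_a H_e.
rewrite -cZE in FHmu; have := Z_vdeg0 (msuppZ_le FHmu).
by rewrite wmu; lia.
Qed.

Lemma initial_formsM_vdeg_bound : (b <= k)%N.
Proof.
have [F0 [G0 [PF0 PG0 c0 G0_b]]] := initial_forms_Xtop.
case: (classic (exists2 F, PA F & F0@_ux *: F != F@_ux *: F0)) => [[F PF FF0]|].
  apply: (@initial_forms_below_top (F0@_ux *: F - F@_ux *: F0) G0) => //.
  - exact: initial_forms_comb.
  - by rewrite subr_eq0.
  - by rewrite mcoeffB !mcoeffZ mulrC subrr.
move=> none; exfalso; apply: (initial_forms_not_rank1 PF0 c0) => F PF.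
by apply/eqP/negPn/negP => FF0; apply: none; exists F.
Qed.

End InitialFormsProduct.

Definition xy_mnms n (x y : 'I_n) (m j : nat) : seq 'X_{1..n} :=
  [:: U_(x) *+ m; U_(x) *+ (m - j) + U_(y) *+ j; U_(y) *+ m]%MM.

Section XYIdeal.
Variables (n : nat) (D : idomainType) (x y : 'I_n) (m j : nat).
Hypotheses (xy : x != y) (j_le_m : (j <= m)%N).

Local Notation I := (@mono_ideal n D (xy_mnms x y m j)).

Lemma gen_ideal_xy :
  gen_ideal [:: 'X_x ^+ m; 'X_x ^+ (m - j) * 'X_y ^+ j; 'X_y ^+ m] = I.
Proof. by rewrite /mono_ideal /= !mpolyXn mpolyXD. Qed.

Lemma xy_mdvd_mnm mu : mdvd_some (xy_mnms x y m j) mu ->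
  [\/ (m <= mu x)%N, (m - j <= mu x)%N && (j <= mu y)%N | (m <= mu y)%N].
Proof.
rewrite /mdvd_some /= orbF => /or3P[] /mnm_lepP le; [apply: Or31|apply: Or32|apply: Or33].
- by have := le x; rewrite mulmn1E eqxx.
- have yx : (y == x) = false by rewrite eq_sym (negbTE xy).
  by have := le x; have := le y; rewrite !mnmDE !mulmn1E !eqxx (negbTE xy) yx addn0 add0n => -> ->.
- by have := le y; rewrite mulmn1E eqxx.
Qed.

Lemma xy_mdvd_mdeg mu : mdvd_some (xy_mnms x y m j) mu -> (m <= mdeg mu)%N.
Proof. by have := mnm2_le_mdeg mu xy => le /xy_mdvd_mnm[|/andP[]|]; lia. Qed.

Lemma xy_mdvd_mdeg_eq mu : mdvd_some (xy_mnms x y m j) mu -> mdeg mu = m ->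
  mu x \in [:: m; m - j; 0]%N /\ mu y \in [:: m; j; 0]%N.
Proof.
have := mnm2_le_mdeg mu xy; rewrite !inE => le /xy_mdvd_mnm[|/andP[]|] ? => [|?|] mu_m;
  split; apply/or3P; (apply: Or31 + apply: Or32 + apply: Or33); apply/eqP; lia.
Qed.

Lemma X_in_xy_ideal : I ('X_x ^+ m).
Proof. by rewrite -gen_ideal_xy; exact: (@gen_ideal_nth _ [:: _; _; _] 0). Qed.

Lemma Y_in_xy_ideal : I ('X_y ^+ m).
Proof. by rewrite -gen_ideal_xy; exact: (@gen_ideal_nth _ [:: _; _; _] 2). Qed.

Lemma xy_ideal_nonzero : nonzero_ideal I.
Proof.
split; first exact: gen_ideal_is_ideal.
by exists ('X_x ^+ m); split; [apply: X_in_xy_ideal | apply: mpolyXn_neq0].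
Qed.

Lemma xy_ideal_proper : (0 < m)%N -> ~ I 1.
Proof.
move=> m_gt0 /mono_idealP/(_ 0%MM); rewrite msupp1 mem_head => /(_ isT).
by move/xy_mdvd_mdeg; rewrite mdeg0; lia.
Qed.

Lemma xy_ideal_factor_const A B : is_ideal A -> ideal_eq I (ideal_mul A B) ->
  (exists2 u, A u & u@_0%MM != 0) -> ideal_eq A (@unit_ideal _).
Proof.
move=> hA IAB [u Au u0].
have BI b : B b -> I b by move=> Bb; apply: (mono_ideal_cancel u0); apply/IAB/ideal_mul_prod.
apply: (determinant_trick3 (g0 := 'X_x ^+ m) (g1 := 'X_x ^+ (m - j) * 'X_y ^+ j)
  (g2 := 'X_y ^+ m) hA).
  exact: mpolyXn_neq0.
rewrite -gen_ideal_xy in IAB BI.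
by move=> g /gen_ideal_mem /IAB; apply: ideal_mulSr.
Qed.

End XYIdeal.

Section XYFactor.
Variables (n : nat) (D : idomainType) (x y : 'I_n) (m j : nat).
Hypotheses (xy : x != y) (j_le_m : (j <= m)%N).
Variables (A B : subsetR {mpoly D[n]}) (a b : nat).
Hypothesis hA : is_ideal A.

Local Notation I := (@mono_ideal n D (xy_mnms x y m j)).
Local Notation PA := (initial_forms A a).
Local Notation PB := (initial_forms B b).

Hypothesis IAB : ideal_eq I (ideal_mul A B).
Hypotheses (A_mdeg_ge : forall f, A f -> {in msupp f, forall mu, a <= mdeg mu}%N)
           (B_mdeg_ge : forall g, B g -> {in msupp g, forall mu, b <= mdeg mu}%N).
Hypotheses (A_mdeg_eq : exists2 f, A f & exists2 mu, mu \in msupp f & mdeg mu = a)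
           (B_mdeg_eq : exists2 g, B g & exists2 mu, mu \in msupp g & mdeg mu = b).

Lemma pihomogM_order f g : A f -> B g ->
  pihomog mdeg (a + b) (f * g) = pihomog mdeg a f * pihomog mdeg b g.
Proof.
move=> Af Bg; apply: pihomogM => m1 m2 /(A_mdeg_ge Af) le1 /(B_mdeg_ge Bg) le2 /=; lia.
Qed.

Lemma order_addn : (a + b)%N = m.
Proof.
apply/eqP; rewrite eqn_leq; apply/andP; split.
  have /IAB[l [fs [gs [Afs Bgs XE]]]] := X_in_xy_ideal D x y m j.
  have : (U_(x) *+ m)%MM \in msupp ('X_x ^+ m : {mpoly D[n]}) by rewrite msuppXn mem_head.
  rewrite XE => /msupp_sum_le /flattenP[_ /mapP[i _ ->]].
  move=> /msuppM_le /allpairsP[[m1 m2] [/= /(A_mdeg_ge (Afs i)) le1 /(B_mdeg_ge (Bgs i)) le2 E]].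
  by have := mdegUn x m; rewrite E mdegD; lia.
have [f Af /pihomog_neq0P fa] := A_mdeg_eq; have [g Bg /pihomog_neq0P gb] := B_mdeg_eq.
have := mulf_neq0 fa gb; rewrite -pihomogM_order // => /pihomog_neq0P[mu fgmu <-].
have /IAB/mono_idealP/(_ mu fgmu) : ideal_mul A B (f * g) by apply: ideal_mul_prod.
exact: xy_mdvd_mdeg.
Qed.

Lemma initial_formsM_xy F G : PA F -> PB G ->
  {in msupp (F * G), forall mu : 'X_{1..n},
     mu x \in [:: m; m - j; 0]%N /\ mu y \in [:: m; j; 0]%N}.
Proof.
move=> [f Af ->] [g Bg ->] mu; rewrite -pihomogM_order // order_addn => /msupp_pihomog[mu_m fgmu].
have /IAB/mono_idealP/(_ mu fgmu) : ideal_mul A B (f * g) by apply: ideal_mul_prod.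
by move/xy_mdvd_mdeg_eq; apply.
Qed.

Lemma xy_ideal_initial Z : I Z -> pihomog mdeg m Z = Z -> ideal_mul PA PB Z.
Proof.
move=> /IAB[l [fs [gs [Afs Bgs ZE]]]] <-; exists l.
exists (fun i => pihomog mdeg a (fs i)), (fun i => pihomog mdeg b (gs i)).
split=> [i|i|]; [by exists (fs i)|by exists (gs i)|].
by rewrite ZE linear_sum -order_addn; apply: eq_bigr => i _; apply: pihomogM_order.
Qed.

Lemma order_le_vdeg : (0 < a)%N -> (0 < b)%N -> (b <= m - j)%N /\ (b <= j)%N.
Proof.
move=> a_gt0 b_gt0; have yx : y != x by rewrite eq_sym.
have Xn_PAB i : I ('X_i ^+ m) -> ideal_mul PA PB ('X_i ^+ m).
  by move=> Ii; apply: xy_ideal_initial; rewrite ?pihomog_Xn.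
have Xn_vdeg0 i i' : i != i' ->
    {in msupp ('X_i ^+ m : {mpoly D[n]}), forall mu, vdeg i' mu = 0%N}.
  by move=> ii' mu; rewrite msuppXn inE => /eqP ->; rewrite /vdeg mulmn1E (negbTE ii').
split.
- apply: (initial_formsM_vdeg_bound (x := x) (Z := 'X_y ^+ m) hA a_gt0 b_gt0).
  + by move=> F G PF PG mu /(initial_formsM_xy PF PG)[mux _]; rewrite order_addn.
  + by rewrite order_addn; apply/Xn_PAB/X_in_xy_ideal.
  + exact: mpolyXn_neq0.
  + exact: Xn_vdeg0.
  + exact/Xn_PAB/Y_in_xy_ideal.
- apply: (initial_formsM_vdeg_bound (x := y) (Z := 'X_x ^+ m) hA a_gt0 b_gt0).
  + by move=> F G PF PG mu /(initial_formsM_xy PF PG)[_ muy]; rewrite order_addn.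
  + by rewrite order_addn; apply/Xn_PAB/Y_in_xy_ideal.
  + exact: mpolyXn_neq0.
  + exact: Xn_vdeg0.
  + exact/Xn_PAB/X_in_xy_ideal.
Qed.

End XYFactor.

Lemma xy_ideal_factor_trivial n (D : idomainType) (x y : 'I_n) (m j : nat)
    (A B : subsetR {mpoly D[n]}) :
  x != y -> (j <= m)%N -> m <> (2 * j)%N ->
  nonzero_ideal A -> nonzero_ideal B -> ideal_eq (mono_ideal (xy_mnms x y m j)) (ideal_mul A B) ->
  ideal_eq A (@unit_ideal _) \/ ideal_eq B (@unit_ideal _).
Proof.
move=> xy j_le_m m2j [hA /ideal_mdeg_min[a [A_ge A_eq]]] [hB /ideal_mdeg_min[b [B_ge B_eq]]] IAB.
have IBA : ideal_eq (mono_ideal (xy_mnms x y m j)) (ideal_mul B A).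
  by move=> f; rewrite IAB; apply: ideal_mulC.
have const_term C c : (exists2 f, C f & exists2 mu, mu \in msupp f & mdeg mu = c) -> c = 0%N ->
    exists2 u, C u & u@_0%MM != 0.
  move=> [u Cu [mu u_mu mu0]] c0; exists u => //; rewrite -mcoeff_msupp.
  by move/eqP: mu0; rewrite c0 mdeg_eq0 => /eqP <-.
have [a0|a_gt0] := posnP a.
  by left; apply: (xy_ideal_factor_const hA IAB); apply: const_term A_eq a0.
have [b0|b_gt0] := posnP b.
  by right; apply: (xy_ideal_factor_const hB IBA); apply: const_term B_eq b0.
have := order_addn xy j_le_m IAB A_ge B_ge A_eq B_eq.
have := order_le_vdeg xy j_le_m hA IAB A_ge B_ge A_eq B_eq a_gt0 b_gt0.
have := order_le_vdeg xy j_le_m hB IBA B_ge A_ge B_eq A_eq b_gt0 a_gt0.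
lia.
Qed.

Section Square.
Variables (n : nat) (D : idomainType) (x y : 'I_n) (j : nat).

Local Notation J := (gen_ideal [:: 'X_x ^+ j; 'X_y ^+ j] : subsetR {mpoly D[n]}).

Lemma xy_ideal_square :
  ideal_eq (gen_ideal [:: 'X_x ^+ (j + j); 'X_x ^+ (j + j - j) * 'X_y ^+ j; 'X_y ^+ (j + j)])
           (ideal_mul J J).
Proof.
have JX : J ('X_x ^+ j) by apply: gen_ideal_mem; rewrite mem_head.
have JY : J ('X_y ^+ j) by apply: gen_ideal_mem; rewrite !inE eqxx orbT.
move=> f; split.
  apply: gen_ideal_min; first exact/ideal_mul_is_ideal/gen_ideal_is_ideal.
  by case=> [|[|[|]]] //= _; rewrite ?addnK ?exprD; apply: ideal_mul_prod.
apply: ideal_mul_min; first exact: gen_ideal_is_ideal.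
move=> _ _ [c ->] [d ->]; rewrite !big_ord_recl !big_ord0 !addr0 /=.
set c0 := c ord0; set c1 := c (lift ord0 ord0); set d0 := d ord0; set d1 := d (lift ord0 ord0).
exists (fun k : 'I_3 => [:: c0 * d0; c0 * d1 + c1 * d0; c1 * d1]`_k).
by rewrite !big_ord_recl big_ord0 addr0 /= addnK !exprD; ring.
Qed.

Lemma xy_power_ideal_nonzero : nonzero_ideal J.
Proof.
split; first exact: gen_ideal_is_ideal.
by exists ('X_x ^+ j); split; [apply: gen_ideal_mem; rewrite mem_head | apply: mpolyXn_neq0].
Qed.

End Square.

Unset Implicit Arguments.

Theorem corollary3p4 (D : idomainType) (N : nat) (hN : (1 < N)%N) (m j : nat) :
  ideal_monoid_BF {mpoly D[N]} ->
  (2 <= m)%N -> (1 <= j <= m - 1)%N ->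
  (ideal_atom
     (@gen_ideal {mpoly D[N]} [:: 'X_(var1 hN) ^+ m;
               'X_(var1 hN) ^+ (m - j) * 'X_(var2 hN) ^+ j;
               'X_(var2 hN) ^+ m])
   <-> m <> (2 * j)%N).
Proof.
move=> _ m_ge2 /andP[j_gt0 j_lt_m].
set x := var1 hN; set y := var2 hN.
have xy : x != y by rewrite -val_eqE.
have j_le_m : (j <= m)%N by lia.
have I_proper : ~ @mono_ideal N D (xy_mnms x y m j) 1 := xy_ideal_proper xy j_le_m (ltnW m_ge2).
rewrite gen_ideal_xy; split=> [[_ _ atom] m2j | m2j].
  have J_nonzero := @xy_power_ideal_nonzero _ D x y j.
  move: I_proper atom; rewrite m2j mul2n -addnn -gen_ideal_xy => I_proper atom.
  have [] := atom _ _ J_nonzero J_nonzero (xy_ideal_square x y j) => /(_ 1)[_ /(_ I) J1];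
    by apply/I_proper/(xy_ideal_square x y j); rewrite -[1]mulr1; apply: ideal_mul_prod.
split=> [|/(_ 1)[_ /(_ I)] //|A B]; first exact: xy_ideal_nonzero.
exact: xy_ideal_factor_trivial.
Qed.
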